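(* Let $a<b$, let $F:(a,b)\to\mathcal{K}(\mathbb{R}^n)$ and let $x_0\in(a,b)$. (i) If $F$ is metrically differentiable from the right (respectively, from the left) at $x_0$, then $F$ is right (respectively, left) continuous at $x_0$ with respect to the Hausdorff metric, i.e. $\lim_{x\to x_0^+}\mathrm{haus}(F(x),F(x_0))=0$ (respectively, $\lim_{x\to x_0^-}\mathrm{haus}(F(x),F(x_0))=0$). (ii) If $F$ is constant on $(a,b)$, then for every $x\in(a,b)$ and every $y\in F(x)$ one has $D^M_+F(x)|_y=\{0\}$ and $D^M_-F(x)|_y=\{0\}$. (iii) If $F$ is metrically differentiable from the right (respectively, from the left) at $x_0$ and $y_0\in F(x_0)$ is such that $D^M_+F(x_0)|_{y_0}\neq\{0\}$ (respectively, $D^M_-F(x_0)|_{y_0}\neq\{0\}$), then $(x_0,y_0)$ lies on the boundary (in $\mathbb{R}\times\mathbb{R}^n$) of $\mathrm{Graph}(F)=\{(x,y): x\in(a,b),\ y\in F(x)\}$.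
   Context: $\mathcal{K}(\mathbb{R}^n)$ is the set of nonempty compact subsets of $\mathbb{R}^n$, $|\cdot|$ the Euclidean norm, $\mathrm{dist}(x,A)=\min_{a\in A}|x-a|$, and $\mathrm{haus}$ the Hausdorff distance. For $a\in\mathbb{R}^n$, $B\in\mathcal{K}(\mathbb{R}^n)$, $\Pi_B(a)=\{b\in B: |a-b|=\mathrm{dist}(a,B)\}$. For $A,B\in\mathcal{K}(\mathbb{R}^n)$ the set of metric pairs is $\Pi(A,B)=\{(a,b)\in A\times B: a\in\Pi_A(b)\text{ or } b\in\Pi_B(a)\}$. For $x_0\neq x$ in $(a,b)$ and $y_0\in F(x_0)$, the first metric divided difference anchored at $y_0$ is $[x_0,x]^MF|_{y_0}=\{\frac{y-y_0}{x-x_0}: (y_0,y)\in\Pi(F(x_0),F(x))\}$. $F$ is metrically differentiable from the right at $x_0$ if for every $y\in F(x_0)$ there is a nonempty set $D^M_+F(x_0)|_y$ of vectors such that for every $\epsilon>0$ there is $\delta>0$ with $\sup_{y\in F(x_0)}\mathrm{haus}(D^M_+F(x_0)|_y,[x_0,x]^MF|_y)<\epsilon$ whenever $0<x-x_0<\delta$; $D^M_+F(x_0)|_y$ is the right metric derivative of $F$ at $x_0$ anchored at $y$. Metric differentiability from the left and $D^M_-F(x_0)|_y$ are defined in the same way with $0<x_0-x<\delta$. *)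

From HB Require Import structures.
From mathcomp Require Import all_boot all_order all_algebra.
From mathcomp Require Import all_classical all_reals all_analysis.
Set Implicit Arguments. Unset Strict Implicit. Unset Printing Implicit Defensive.
Import Order.TTheory GRing.Theory Num.Theory.
Import numFieldNormedType.Exports.
Local Open Scope classical_set_scope.
Local Open Scope ring_scope.

Section MetricDefs.
Variables (R : realType) (n : nat).
Local Notation V := 'rV[R]_n.

Definition enorm (v : V) : R := Num.sqrt (\sum_(i < n) v ord0 i ^+ 2).

Definition edist (x : V) (A : set V) : \bar R :=
  ereal_inf [set (enorm (x - a))%:E | a in A].

Definition ehaus (A B : set V) : \bar R :=
  maxe (ereal_sup [set edist a B | a in A]) (ereal_sup [set edist b A | b in B]).

Definition mproj (B : set V) (a : V) : set V :=
  [set b | B b /\ (enorm (a - b))%:E = edist a B].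

Definition mpairs (A B : set V) : set (V * V) :=
  [set p | A p.1 /\ B p.2 /\ (mproj A p.2 p.1 \/ mproj B p.1 p.2)].

Definition mdivdiff (F : R -> set V) (x0 x : R) (y0 : V) : set V :=
  [set (x - x0)^-1 *: (y - y0) | y in [set y | mpairs (F x0) (F x) (y0, y)]].

(* D is a right metric derivative of F : (a,b) -> K(R^n) at x0
   (D y = D^M_+ F(x0)|_y for y in F(x0)) *)
Definition is_right_mderiv (a b : R) (F : R -> set V) (x0 : R)
    (D : V -> set V) : Prop :=
  (forall y, F x0 y -> D y !=set0) /\
  forall eps : R, 0 < eps -> exists2 delta : R, 0 < delta &
    forall x, a < x < b -> 0 < x - x0 < delta ->
      (ereal_sup [set ehaus (D y) (mdivdiff F x0 x y) | y in F x0] < eps%:E)%E.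

Definition is_left_mderiv (a b : R) (F : R -> set V) (x0 : R)
    (D : V -> set V) : Prop :=
  (forall y, F x0 y -> D y !=set0) /\
  forall eps : R, 0 < eps -> exists2 delta : R, 0 < delta &
    forall x, a < x < b -> 0 < x0 - x < delta ->
      (ereal_sup [set ehaus (D y) (mdivdiff F x0 x y) | y in F x0] < eps%:E)%E.

Definition right_mdifferentiable a b F x0 : Prop :=
  exists D, is_right_mderiv a b F x0 D.
Definition left_mdifferentiable a b F x0 : Prop :=
  exists D, is_left_mderiv a b F x0 D.

Definition graph (a b : R) (F : R -> set V) : set (R * V) :=
  [set p | a < p.1 < b /\ F p.1 p.2].

Definition boundary {T : topologicalType} (A : set T) : set T :=
  closure A `\` interior A.

End MetricDefs.

(* (i): with eps = 1 in the definition, the divided differences at one fixed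
   x1 on the given side of x0 are within Hausdorff distance 1 of the
   derivative, so the sets D y are uniformly bounded; hence so are all divided
   differences [x0,x]^M F|_y with x near x0, say by C.  Every point of F(x)
   forms a metric pair with a nearest point of F(x0) and vice versa, so
   haus(F x, F x0) <= C |x - x0|.
   (ii), (iii): if the divided differences anchored at y0 are eventually {0},
   the derivative at y0 is {0}.  This happens when F is constant, and at an
   interior point (x0, y0) of the graph: then y0 lies in F(x) for x near x0,
   and y0, being interior to F(x0), is the nearest point of F(x0) to no point
   but itself. *)

From Pilot Require Import Defs.
From HB Require Import structures.
From mathcomp Require Import all_boot all_order all_algebra.
From mathcomp Require Import all_classical all_reals all_analysis.
From mathcomp Require Import ring lra.
Set Implicit Arguments.
Unset Strict Implicit.
Unset Printing Implicit Defensive.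
Import Order.TTheory GRing.Theory Num.Theory.
Import numFieldNormedType.Exports.
Local Open Scope classical_set_scope.
Local Open Scope ring_scope.

(* MathComp-Analysis also defines an [edist]. *)
Local Notation edist := Defs.edist.

Lemma at_right_cvg {R : numFieldType} (x : R) : x^'+ --> x.
Proof. exact: cvg_within. Qed.
Arguments at_right_cvg {R} x.

Lemma at_left_cvg {R : numFieldType} (x : R) : x^'- --> x.
Proof. exact: cvg_within. Qed.
Arguments at_left_cvg {R} x.

Section MetricDerivatives.
Variables (R : realType) (n : nat).
Local Notation V := 'rV[R]_n.
Implicit Types u v : V.

Lemma enorm_ge0 v : 0 <= enorm v.
Proof. exact: sqrtr_ge0. Qed.

Lemma sqr_enorm v : enorm v ^+ 2 = \sum_(i < n) v ord0 i ^+ 2.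
Proof. by rewrite sqr_sqrtr // sumr_ge0 // => i _; rewrite sqr_ge0. Qed.

Lemma enorm_eq0 v : (enorm v == 0) = (v == 0).
Proof.
apply/idP/eqP => [|->]; last first.
  by rewrite /enorm big1 ?sqrtr0 // => i _; rewrite mxE expr0n.
rewrite sqrtr_eq0 => v0.
have /psumr_eq0P sq0 : \sum_(i < n) v ord0 i ^+ 2 = 0.
  by apply/eqP; rewrite eq_le v0 sumr_ge0 // => i _; rewrite sqr_ge0.
apply/rowP => i; apply/eqP; rewrite mxE -sqrf_eq0 sq0 // => j _; exact: sqr_ge0.
Qed.

Lemma enorm0 : enorm (0 : V) = 0.
Proof. by apply/eqP; rewrite enorm_eq0. Qed.

Lemma enormZ c v : enorm (c *: v) = `|c| * enorm v.
Proof.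
rewrite /enorm (eq_bigr (fun i => c ^+ 2 * v ord0 i ^+ 2)) => [|i _]; last first.
  by rewrite mxE exprMn.
by rewrite -mulr_sumr sqrtrM ?sqr_ge0 // sqrtr_sqr.
Qed.

Lemma enormN v : enorm (- v) = enorm v.
Proof. by rewrite -scaleN1r enormZ normrN1 mul1r. Qed.

Lemma enormBC u v : enorm (u - v) = enorm (v - u).
Proof. by rewrite -enormN opprB. Qed.

Lemma dot_le_enorm u v : \sum_(i < n) u ord0 i * v ord0 i <= enorm u * enorm v.
Proof.
set p := enorm u; set q := enorm v.
have key : p * q * \sum_(i < n) u ord0 i * v ord0 i <= (p * q) ^+ 2.
  have : 0 <= \sum_(i < n) (q * u ord0 i - p * v ord0 i) ^+ 2.
    by apply: sumr_ge0 => i _; exact: sqr_ge0.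
  rewrite (eq_bigr (fun i => q ^+ 2 * u ord0 i ^+ 2 + p ^+ 2 * v ord0 i ^+ 2
                             - 2 * (p * q) * (u ord0 i * v ord0 i))); last first.
    by move=> i _; ring.
  rewrite sumrB big_split /= -!mulr_sumr -!sqr_enorm -/p -/q; nra.
have [pq0|pq_neq0] := eqVneq (p * q) 0.
  move: pq0 => /eqP; rewrite mulf_eq0 !enorm_eq0 => /orP[]/eqP->;
    by rewrite big1 ?mulr_ge0 ?enorm_ge0 // => i _; rewrite mxE ?mul0r ?mulr0.
have pq_gt0 : 0 < p * q by rewrite lt_def pq_neq0 mulr_ge0 ?enorm_ge0.
by rewrite -(ler_pM2l pq_gt0) -expr2.
Qed.

Lemma enormD u v : enorm (u + v) <= enorm u + enorm v.
Proof.
rewrite -(ler_pXn2r (_ : 0 < 2)%N) ?nnegrE ?addr_ge0 ?enorm_ge0 // sqrrD.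
rewrite sqr_enorm (eq_bigr (fun i => u ord0 i ^+ 2 + v ord0 i ^+ 2
                                     + 2 * (u ord0 i * v ord0 i))) => [|i _]; last first.
  by rewrite !mxE; ring.
rewrite !big_split /= -!sqr_enorm -mulr_sumr.
have := dot_le_enorm u v; lra.
Qed.

Lemma enorm_continuous : continuous (@enorm R n).
Proof.
move=> v; apply: continuous_comp; last exact: sqrt_continuous.
apply: (@continuous_big R _ +%R 0 xpredT add_continuous _ _
  (fun i (w : V) => w ord0 i ^+ 2)) => i _ w.
by apply: continuousM; exact: coord_continuous.
Qed.

Lemma compact_enorm_bounded (A : set V) :
  compact A -> exists M, forall v, A v -> enorm v <= M.
Proof.
move=> cA; have [->|/set0P A0] := eqVneq A set0; first by exists 0.
have [c _ cmax] := EVT_max_rV A0 cA (continuous_subspaceT enorm_continuous).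
by exists (enorm c) => v Av; apply: cmax; rewrite inE.
Qed.

Lemma edist_ge0 v (A : set V) : (0 <= edist v A)%E.
Proof. by apply: le_ereal_inf_tmp => _ [a _ <-]; rewrite lee_fin enorm_ge0. Qed.

Lemma edist_le v (A : set V) a : A a -> (edist v A <= (enorm (v - a))%:E)%E.
Proof. by move=> Aa; apply: ereal_inf_lbound; exists a. Qed.

Lemma edist_ltP v (A : set V) e :
  (edist v A < e%:E)%E -> exists2 a, A a & enorm (v - a) < e.
Proof. by case/ereal_inf_lt => _ [a Aa <-]; rewrite lte_fin; exists a. Qed.

Lemma edist_mem v (A : set V) : A v -> edist v A = 0%E.
Proof.
move=> Av; apply/eqP; rewrite eq_le edist_ge0 andbT.
by apply: le_trans (edist_le v Av) _; rewrite subrr enorm0.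
Qed.

Lemma edist_set1 u v : edist u [set v] = (enorm (u - v))%:E.
Proof.
apply/eqP; rewrite eq_le edist_le //=.
by apply: le_ereal_inf_tmp => _ [_ -> <-].
Qed.

Lemma mproj_mem (B : set V) u v : B u -> mproj B u v -> v = u.
Proof.
move=> Bu [_]; rewrite edist_mem // => /eqP.
by rewrite eqe enorm_eq0 subr_eq0 => /eqP.
Qed.

Lemma mproj_id (B : set V) u : B u -> mproj B u u.
Proof. by move=> Bu; split; rewrite // edist_mem // subrr enorm0. Qed.

Lemma exists_mproj (B : set V) u : compact B -> B !=set0 -> exists v, mproj B u v.
Proof.
move=> cB B0.
have du : continuous (fun v => enorm (u - v)).
  move=> v; apply: continuous_comp; last exact: enorm_continuous.
  by apply: (@continuousB _ _ _ (cst u) id); [exact: cst_continuous | exact: cvg_id].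
have [v Bv vmin] := EVT_min_rV B0 cB (continuous_subspaceT du).
rewrite inE in Bv; exists v; split => //; apply/eqP.
rewrite eq_le edist_le // andbT.
by apply: le_ereal_inf_tmp => _ [w Bw <-]; rewrite lee_fin vmin ?inE.
Qed.

Lemma ehausC (A B : set V) : ehaus A B = ehaus B A.
Proof. exact: maxC. Qed.

Lemma edist_le_ehaus (A B : set V) a : A a -> (edist a B <= ehaus A B)%E.
Proof. by move=> Aa; rewrite le_max ereal_sup_ubound //; exists a. Qed.

Lemma ehaus_le (A B : set V) e :
  (forall a, A a -> edist a B <= e)%E -> (forall b, B b -> edist b A <= e)%E ->
  (ehaus A B <= e)%E.
Proof.
move=> AB BA; rewrite /ehaus ge_max.
by apply/andP; split; apply: ge_ereal_sup => _ [u ? <-]; [exact: AB | exact: BA].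
Qed.

Lemma ehaus_ge0 (A B : set V) : A !=set0 -> (0 <= ehaus A B)%E.
Proof. by move=> [a Aa]; apply: le_trans (edist_ge0 a B) (edist_le_ehaus B Aa). Qed.

Lemma ehaus_set1 v : ehaus [set v] [set v] = 0%E.
Proof. by rewrite /ehaus image_set1 edist_set1 subrr enorm0 ereal_sup1 maxxx. Qed.

Lemma ehaus_lt_bounded (A B : set V) e M :
  (ehaus A B < e%:E)%E -> (forall b, B b -> enorm b <= M) ->
  forall a, A a -> enorm a <= e + M.
Proof.
move=> ABe BM a Aa.
have [b Bb abe] := edist_ltP (le_lt_trans (edist_le_ehaus B Aa) ABe).
by rewrite -(subrK b a); apply: le_trans (enormD _ _) _; rewrite lerD ?BM ?ltW.
Qed.

Lemma ehaus_set1_small (A : set V) v : A !=set0 ->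
  (forall e, 0 < e -> (ehaus A [set v] < e%:E)%E) -> A = [set v].
Proof.
move=> [a0 Aa0] Av_small.
suff Av : forall a, A a -> a = v.
  by apply/seteqP; split=> [a /Av -> //|_ ->]; rewrite -(Av a0).
move=> a Aa; apply/eqP; rewrite -subr_eq0 -enorm_eq0 eq_le enorm_ge0 andbT.
apply/ler_addgt0Pr => e e0; rewrite add0r -lee_fin -edist_set1 ltW //.
exact: le_lt_trans (edist_le_ehaus _ Aa) (Av_small e e0).
Qed.

Lemma mproj_nbhs (B : set V) u v : nbhs v B -> mproj B u v -> u = v.
Proof.
move=> Bv [_ uv_min].
(* points of the segment [v, u] near v lie in B and are closer to u than v *)
have segment_v : (fun t => v + t *: (u - v)) @ 0^'+ --> v.
  apply: cvg_at_right_filter; rewrite -[X in _ --> X]addr0.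
  rewrite -(scale0r (u - v)); apply: cvgD; first exact: cvg_cst.
  by apply: cvgZ; [exact: cvg_id | exact: cvg_cst].
have [t [Bt t_gt0 t_lt1]] : exists t, [/\ B (v + t *: (u - v)), 0 < t & t < 1].
  apply: (@filter_ex _ 0^'+); near=> t; split.
  - by near: t; exact: segment_v.
  - by near: t; exact: nbhs_right_gt.
  - by near: t; apply: nbhs_right_lt; exact: ltr01.
have := edist_le u Bt; rewrite -uv_min lee_fin.
have -> : u - (v + t *: (u - v)) = (1 - t) *: (u - v) by rewrite scalerBl scale1r opprD addrA.
rewrite enormZ gtr0_norm ?subr_gt0 // => uv_le.
apply/eqP; rewrite -subr_eq0 -enorm_eq0 eq_le enorm_ge0 andbT.
by have := enorm_ge0 (u - v); nra.
Unshelve. all: by end_near.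
Qed.

Section DividedDifferences.
Variable F : R -> set V.

Lemma mdivdiff_eq0 x0 x y0 :
  F x0 y0 -> F x y0 -> (forall y, F x y -> mproj (F x0) y y0 -> y = y0) ->
  mdivdiff F x0 x y0 = [set 0].
Proof.
move=> Fx0y0 Fxy0 proj_y0.
apply/seteqP; split=> [_ [y [_ [Fxy [y0_proj|y_proj]]] <-]|_ ->] /=.
- by rewrite (proj_y0 y Fxy y0_proj) subrr scaler0.
- by rewrite -(mproj_mem Fxy0 y_proj) subrr scaler0.
- by exists y0; [do 2!split=> //; right; exact: mproj_id | rewrite subrr scaler0].
Qed.

Lemma mdivdiff_const x0 x y : F x = F x0 -> F x0 y -> mdivdiff F x0 x y = [set 0].
Proof.
by move=> Fx_eq Fy; apply: mdivdiff_eq0; rewrite ?Fx_eq // => y' Fy' /(mproj_mem Fy') ->.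
Qed.

Lemma enorm_mdivdiff_le x0 x y q B0 B1 :
  (forall y, F x0 y -> enorm y <= B0) -> (forall y, F x y -> enorm y <= B1) ->
  mdivdiff F x0 x y q -> enorm q <= `|x - x0|^-1 * (B1 + B0).
Proof.
move=> FB0 FB1 [y' [/= Fy [Fy' _]] <-].
rewrite enormZ normfV ler_wpM2l ?invr_ge0 //.
by apply: le_trans (enormD _ _) _; rewrite enormN lerD ?FB0 ?FB1.
Qed.

Lemma ehaus_le_mdivdiff x0 x C : x != x0 ->
  compact (F x) -> F x !=set0 -> compact (F x0) -> F x0 !=set0 ->
  (forall y q, F x0 y -> mdivdiff F x0 x y q -> enorm q <= C) ->
  (ehaus (F x) (F x0) <= (`|x - x0| * C)%:E)%E.
Proof.
move=> xx0 cFx Fx0 cFx0 Fx00 qC.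
have pair_le y y' : mpairs (F x0) (F x) (y, y') -> enorm (y' - y) <= `|x - x0| * C.
  move=> yy'; rewrite -[y' - y](scalerKV (_ : x - x0 != 0)) ?subr_eq0 //.
  by rewrite enormZ ler_wpM2l // (qC y) //; [case: yy' | exists y'].
apply: ehaus_le => u Fu.
- have [v [Fv uv]] := exists_mproj u cFx0 Fx00.
  by rewrite -uv lee_fin pair_le //; do 2!split=> //; left.
- have [v [Fv uv]] := exists_mproj u cFx Fx0.
  by rewrite -uv lee_fin enormBC pair_le //; do 2!split=> //; right.
Qed.

End DividedDifferences.

(* One-sided metric derivatives, the side being given by a filter such as
   [x0^'+] or [x0^'-]. *)
Definition is_mderiv_along (G : set_system R) (F : R -> set V) x0 (D : V -> set V) :=
  (forall y, F x0 y -> D y !=set0) /\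
  forall eps, 0 < eps -> \forall x \near G, forall y, F x0 y ->
    (ehaus (D y) (mdivdiff F x0 x y) < eps%:E)%E.

Lemma is_right_mderiv_along a b F x0 D :
  a < x0 < b -> is_right_mderiv a b F x0 D -> is_mderiv_along x0^'+ F x0 D.
Proof.
move=> /andP[ax0 x0b] [DN Dclose]; split=> // e /Dclose[d d_gt0 Dd].
near=> x => y Fy; apply: le_lt_trans (Dd x _ _); first by apply: ereal_sup_ubound; exists y.
- have x0x : x0 < x by near: x; exact: nbhs_right_gt.
  by rewrite (lt_trans ax0 x0x); near: x; exact: nbhs_right_lt.
- rewrite subr_gt0 ltrBlDl; apply/andP; split; near: x; first exact: nbhs_right_gt.
  by apply: nbhs_right_lt; rewrite ltrDl.
Unshelve. all: by end_near.
Qed.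

Lemma is_left_mderiv_along a b F x0 D :
  a < x0 < b -> is_left_mderiv a b F x0 D -> is_mderiv_along x0^'- F x0 D.
Proof.
move=> /andP[ax0 x0b] [DN Dclose]; split=> // e /Dclose[d d_gt0 Dd].
near=> x => y Fy; apply: le_lt_trans (Dd x _ _); first by apply: ereal_sup_ubound; exists y.
- have xx0 : x < x0 by near: x; exact: nbhs_left_lt.
  by rewrite (lt_trans xx0 x0b) andbT; near: x; exact: nbhs_left_gt.
- rewrite subr_gt0 ltrBlDr -ltrBlDl; apply/andP; split; near: x; first exact: nbhs_left_lt.
  by apply: nbhs_left_gt; rewrite gtrBl.
Unshelve. all: by end_near.
Qed.

Lemma interior_graph_mdivdiff_eq0 (a b : R) (F : R -> set V) x0 y0 :
  interior (graph a b F) (x0, y0) -> \forall x \near x0, mdivdiff F x0 x y0 = [set 0].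
Proof.
move=> /= [[U W] [/= nU nW] UW].
have FW x : U x -> W `<=` F x by move=> Ux y Wy; have [] := UW (x, y) (conj Ux Wy).
have [Ux0 Wy0] := (nbhs_singleton nU, nbhs_singleton nW).
near=> x; apply: mdivdiff_eq0; [exact: FW | | move=> y _].
- by apply: FW Wy0; near: x; exact: nU.
- by apply: mproj_nbhs; apply: filterS nW; exact: FW.
Unshelve. all: by end_near.
Qed.

Section DerivativeAlongFilter.
Variables (G : set_system R) (F : R -> set V) (x0 : R) (D : V -> set V).
Hypothesis FD : is_mderiv_along G F x0 D.
Context {PG : ProperFilter G}.
Hypothesis Gx0 : G --> x0.

Lemma mderiv_along_eq0 y0 : F x0 y0 ->
  (\forall x \near x0, mdivdiff F x0 x y0 = [set 0]) -> D y0 = [set 0].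
Proof.
have [DN Dclose] := FD; move=> Fy0 mdd_eq0.
apply: ehaus_set1_small (DN _ Fy0) _ => e e_gt0.
suff [x [Dx <-]] : exists x, (forall y, F x0 y -> (ehaus (D y) (mdivdiff F x0 x y) < e%:E)%E)
                            /\ mdivdiff F x0 x y0 = [set 0] by exact: Dx.
by apply: (@filter_ex _ G); near=> x; split; near: x; [exact: Dclose | exact: Gx0].
Unshelve. all: by end_near.
Qed.

Lemma mderiv_along_boundary a b y0 : a < x0 < b -> F x0 y0 -> D y0 <> [set 0] ->
  boundary (graph a b F) (x0, y0).
Proof.
move=> x0ab Fy0 Dy0_neq0; split; first exact: subset_closure.
by move/interior_graph_mdivdiff_eq0/(mderiv_along_eq0 Fy0).
Qed.

Section Continuity.
Variables a b : R.
Hypotheses (Fcompact : forall x, a < x < b -> compact (F x) /\ F x !=set0)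
  (x0ab : a < x0 < b) (G_neq : \forall x \near G, x != x0).

Let G_ab : \forall x \near G, a < x < b.
Proof. by apply: Gx0; have := near_in_itvoo x0ab; apply: filterS => x; rewrite in_itv. Qed.

Lemma mderiv_along_bounded : exists M, forall y d, F x0 y -> D y d -> enorm d <= M.
Proof.
have [_ Dclose] := FD.
have [x1 [x1_neq x1ab Dx1]] : exists x1, [/\ x1 != x0, a < x1 < b &
    forall y, F x0 y -> (ehaus (D y) (mdivdiff F x0 x1 y) < 1%:E)%E].
  apply: (@filter_ex _ G); near=> x; split; near: x; [exact: G_neq | exact: G_ab | exact: Dclose].
have [B0 FB0] := compact_enorm_bounded (Fcompact x0ab).1.
have [B1 FB1] := compact_enorm_bounded (Fcompact x1ab).1.
exists (1 + `|x1 - x0|^-1 * (B1 + B0)) => y d Fy Dd.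
by apply: ehaus_lt_bounded (Dx1 y Fy) _ _ Dd => q; exact: enorm_mdivdiff_le.
Unshelve. all: by end_near.
Qed.

Lemma mderiv_along_ehaus_cvg : ehaus (F x) (F x0) @[x --> G] --> 0%E.
Proof.
have [_ Dclose] := FD; have [M DM] := mderiv_along_bounded.
have [cFx0 Fx00] := Fcompact x0ab.
apply: (@squeeze_cvge _ _ _ _ (cst 0%E) _ (fun x => (`|x - x0| * (1 + M))%:E)).
- near=> x; have xab : a < x < b by near: x; exact: G_ab.
  have Dx : forall y, F x0 y -> (ehaus (D y) (mdivdiff F x0 x y) < 1%:E)%E.
    by near: x; exact: Dclose.
  have [cFx Fx0] := Fcompact xab.
  rewrite ehaus_ge0 //=; apply: ehaus_le_mdivdiff => // [|y q Fy yq].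
    by near: x; exact: G_neq.
  by move: (Dx y Fy); rewrite ehausC => /ehaus_lt_bounded; apply=> // d; exact: DM.
- exact: cvg_cst.
- apply: cvg_EFin; first exact: nearW.
  apply: cvg_trans (cvg_app _ Gx0) _.
  suff : (fun x => `|x - x0| * (1 + M)) @ x0 --> `|x0 - x0| * (1 + M).
    by rewrite subrr normr0 mul0r.
  apply: cvgM; last exact: cvg_cst.
  by apply: cvg_norm; apply: cvgB; [exact: cvg_id | exact: cvg_cst].
Unshelve. all: by end_near.
Qed.

End Continuity.
End DerivativeAlongFilter.

Section ConstantMap.
Variables (a b : R) (F : R -> set V) (x : R).
Hypothesis Fconst : forall x', a < x' < b -> F x' = F x.

Lemma const_mderiv_sup_le0 x' : a < x' < b ->
  (ereal_sup [set ehaus [set 0%R] (mdivdiff F x x' y) | y in F x] <= 0)%E.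
Proof.
move=> x'ab; apply: ge_ereal_sup => _ [y Fy <-].
by rewrite mdivdiff_const ?Fconst // ehaus_set1.
Qed.

Lemma const_is_right_mderiv : is_right_mderiv a b F x (fun=> [set 0]).
Proof.
split=> [y _|e e_gt0]; first by exists 0.
by exists 1 => // x' x'ab _; apply: le_lt_trans (const_mderiv_sup_le0 x'ab) _.
Qed.

Lemma const_is_left_mderiv : is_left_mderiv a b F x (fun=> [set 0]).
Proof.
split=> [y _|e e_gt0]; first by exists 0.
by exists 1 => // x' x'ab _; apply: le_lt_trans (const_mderiv_sup_le0 x'ab) _.
Qed.

Lemma const_mdivdiff_near y : a < x < b -> F x y ->
  \forall x' \near x, mdivdiff F x x' y = [set 0].
Proof.
move=> xab Fy; apply: filterS (near_in_itvoo xab) => x'.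
by rewrite in_itv => /Fconst Fx'; exact: mdivdiff_const.
Qed.

End ConstantMap.
End MetricDerivatives.

Theorem mainTheorem1 (R : realType) (n : nat) (a b : R) (F : R -> set 'rV[R]_n)
  (x0 : R) :
  a < b ->
  (forall x, a < x < b -> compact (F x) /\ F x !=set0) ->
  a < x0 < b ->
  (* (i) *)
  ((right_mdifferentiable a b F x0 ->
      ehaus (F x) (F x0) @[x --> x0^'+] --> 0%E) /\
   (left_mdifferentiable a b F x0 ->
      ehaus (F x) (F x0) @[x --> x0^'-] --> 0%E)) /\
  (* (ii) *)
  ((forall x y, a < x < b -> a < y < b -> F x = F y) ->
    forall x, a < x < b ->
      (is_right_mderiv a b F x (fun _ => [set 0]) /\
       forall D, is_right_mderiv a b F x D -> forall y, F x y -> D y = [set 0]) /\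
      (is_left_mderiv a b F x (fun _ => [set 0]) /\
       forall D, is_left_mderiv a b F x D -> forall y, F x y -> D y = [set 0])) /\
  (* (iii) *)
  (forall y0, F x0 y0 ->
    (forall D, is_right_mderiv a b F x0 D -> D y0 <> [set 0] ->
       boundary (graph a b F) (x0, y0)) /\
    (forall D, is_left_mderiv a b F x0 D -> D y0 <> [set 0] ->
       boundary (graph a b F) (x0, y0))).
Proof.
move=> _ Fcompact x0ab.
split; [split|split].
- move=> [D /(is_right_mderiv_along x0ab) FD].
  exact: (mderiv_along_ehaus_cvg FD (at_right_cvg x0) Fcompact x0ab (nbhs_right_neq x0)).
- move=> [D /(is_left_mderiv_along x0ab) FD].
  exact: (mderiv_along_ehaus_cvg FD (at_left_cvg x0) Fcompact x0ab (nbhs_left_neq x0)).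
- move=> Fconst x xab; have Fx x' x'ab : F x' = F x := Fconst _ _ x'ab xab.
  split; split; [exact: const_is_right_mderiv | | exact: const_is_left_mderiv |].
  + move=> D /(is_right_mderiv_along xab) FD y Fy.
    exact: (mderiv_along_eq0 FD (at_right_cvg x) Fy (const_mdivdiff_near Fx xab Fy)).
  + move=> D /(is_left_mderiv_along xab) FD y Fy.
    exact: (mderiv_along_eq0 FD (at_left_cvg x) Fy (const_mdivdiff_near Fx xab Fy)).
- move=> y0 Fy0; split=> D.
  + move/(is_right_mderiv_along x0ab) => FD.
    exact: (mderiv_along_boundary FD (at_right_cvg x0) x0ab Fy0).
  + move/(is_left_mderiv_along x0ab) => FD.
    exact: (mderiv_along_boundary FD (at_left_cvg x0) x0ab Fy0).
Qed.
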